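(* Let $C \subset \mathbb{R}^n$ be convex and closed with nonempty interior, and let $h\colon C\to\mathbb{R}$ be Legendre on $C$ and continuous on $C$, such that condition (A) holds: for every sequence $(x_k)_{k\in\mathbb{N}} \subset \mathrm{int}\, C$ and every $y \in C$, if $D_h(y,x_k) \to 0$ then $x_k \to y$. Then $h$ is strictly convex on $C$.
   Context: A convex function $h \colon C \to \mathbb{R}$ on a convex set $C\subset\mathbb{R}^n$ with nonempty interior is called Legendre if (1) $h$ is continuously differentiable on $\mathrm{int}\, C$ and $\|\nabla h(x)\| \to +\infty$ whenever $x \in \mathrm{int}\, C$ approaches a point of the boundary of $C$; and (2) $h$ is strictly convex on $\mathrm{int}\, C$. The Bregman divergence is $D_h(y,x) = h(y) - h(x) - \langle \nabla h(x), y - x\rangle$ for $y \in C$, $x \in \mathrm{int}\, C$. *)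

From HB Require Import structures.
From mathcomp Require Import all_boot all_order all_algebra.
From mathcomp Require Import all_classical all_reals all_analysis.
Set Implicit Arguments. Unset Strict Implicit. Unset Printing Implicit Defensive.
Import Order.TTheory GRing.Theory Num.Theory numFieldNormedType.Exports.
Local Open Scope classical_set_scope.
Local Open Scope ring_scope.

Section Defs.
Context {R : realType} {n : nat}.
Local Notation V := 'rV[R]_n.

Definition inner (u v : V) : R := \sum_(i < n) u ord0 i * v ord0 i.

Definition grad (h : V -> R) (x : V) : V :=
  \row_(i < n) ('d h x (delta_mx ord0 i : V)).

Definition convex_set_in (C : set V) : Prop :=
  forall x y (t : R), C x -> C y -> 0 <= t <= 1 ->
    C (t *: x + (1 - t) *: y).

Definition convex_on (D : set V) (h : V -> R) : Prop :=
  forall x y (t : R), D x -> D y -> 0 <= t <= 1 ->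
    h (t *: x + (1 - t) *: y) <= t * h x + (1 - t) * h y.

Definition strictly_convex_on (D : set V) (h : V -> R) : Prop :=
  forall x y (t : R), D x -> D y -> x != y -> 0 < t < 1 ->
    h (t *: x + (1 - t) *: y) < t * h x + (1 - t) * h y.

(** Legendre function on C (h : C -> R is represented by a total function
    whose values outside C are irrelevant). *)
Definition legendre (C : set V) (h : V -> R) : Prop :=
  [/\ convex_on C h,
      (forall x, interior C x -> differentiable h x),
      (forall x, interior C x -> {for x, continuous (grad h)}),
      (forall b, (closure C `\` interior C) b ->
         `|grad h x| @[x --> within (interior C) (nbhs b)] --> +oo)
    &
      strictly_convex_on (interior C) h].

Definition bregman (h : V -> R) (y x : V) : R :=
  h y - h x - inner (grad h x) (y - x).

End Defs.

From HB Require Import structures.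
From mathcomp Require Import all_boot all_order all_algebra.
From mathcomp Require Import all_classical all_reals all_analysis.
From mathcomp Require Import ring lra.
Set Implicit Arguments. Unset Strict Implicit. Unset Printing Implicit Defensive.
Import Order.TTheory GRing.Theory Num.Theory numFieldNormedType.Exports.
Local Open Scope classical_set_scope.
Local Open Scope ring_scope.

(* If h is affine on a segment of C, i.e. h z = t h x + (1 - t) h y for
   z = t x + (1 - t) y, then D_h(z, p) = t D_h(x, p) + (1 - t) D_h(y, p) for every
   interior p.  Approaching z from the interior along the segment towards an
   interior point c, continuity of h and the gradient inequality make D_h(z, p_k)
   tend to 0; as divergences are nonnegative, D_h(x, p_k) and D_h(y, p_k) tend to 0
   as well, and condition (A) makes p_k converge to both x and y, so x = y. *)

Lemma cvg0_convex_comb_nonneg {R : realFieldType} (t : R) (u v : nat -> R) :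
  0 < t < 1 -> (forall k, 0 <= u k) -> (forall k, 0 <= v k) ->
  t * u k + (1 - t) * v k @[k --> \oo] --> 0 ->
  u k @[k --> \oo] --> 0 /\ v k @[k --> \oo] --> 0.
Proof.
move=> /andP[t0 t1] u0 v0 comb_cvg0.
have squeeze a w : 0 < a -> (forall k, 0 <= w k) ->
    (forall k, a * w k <= t * u k + (1 - t) * v k) -> w k @[k --> \oo] --> 0.
  move=> a0 w0 le_w.
  have bound_cvg0 : a^-1 * (t * u k + (1 - t) * v k) @[k --> \oo] --> 0.
    by rewrite -(mulr0 a^-1); apply: cvgM => //; exact: cvg_cst.
  apply: (squeeze_cvgr _ (cvg_cst 0) bound_cvg0); apply: nearW => k.
  by rewrite w0 ler_pdivlMl ?le_w.
have t1' : 0 < 1 - t by rewrite subr_gt0.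
split; [apply: (squeeze t) | apply: (squeeze (1 - t))] => // k.
- by rewrite lerDl mulr_ge0 // ltW.
- by rewrite lerDr mulr_ge0 // ltW.
Qed.

Section Bregman.
Context {R : realType} {n : nat}.
Local Notation V := 'rV[R]_n.
Implicit Types (C : set V) (h : V -> R).

Lemma inner_gradE h p v : inner (grad h p) v = 'd h p v.
Proof.
rewrite {2}(row_sum_delta v) linear_sum /inner; apply: eq_bigr => i _.
by rewrite mxE linearZ /= mulrC.
Qed.

Lemma bregmanE h y x : bregman h y x = h y - h x - 'd h x (y - x).
Proof. by rewrite /bregman inner_gradE. Qed.

Lemma bregman_convex_comb h x y p t :
  bregman h (t *: x + (1 - t) *: y) p =
  t * bregman h x p + (1 - t) * bregman h y p
  + (h (t *: x + (1 - t) *: y) - (t * h x + (1 - t) * h y)).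
Proof.
rewrite !bregmanE.
have -> : t *: x + (1 - t) *: y - p = t *: (x - p) + (1 - t) *: (y - p).
  by rewrite !scalerBr addrACA -opprD -scalerDl subrKC scale1r.
rewrite linearD !linearZ /=.
rewrite -[t *: 'd h p _]/(t * _) -[(1 - t) *: 'd h p _]/((1 - t) * _).
ring.
Qed.

Lemma convex_on_diff_le C h p q :
  convex_on C h -> C p -> C q -> differentiable h p ->
  'd h p (q - p) <= h q - h p.
Proof.
(* each right difference quotient of h at p in direction q - p is at most h q - h p *)
move=> hconv Cp Cq dhp; rewrite -deriveE //.
have /cvg_ex[l quot_l] := @diff_derivable _ _ _ h p (q - p) dhp.
rewrite /derive (cvg_lim _ quot_l) //.
apply: (cvgr_to_le (cvg_dnbhs_at_right quot_l)); near=> s.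
have s0 : 0 < s by near: s; exact: nbhs_right_gt.
have s1 : s < 1 by near: s; exact: nbhs_right_lt.
rewrite /=; have -> : s *: (q - p) + p = s *: q + (1 - s) *: p.
  by rewrite scalerBr scalerBl scale1r addrA addrAC.
rewrite ler_pdivrMl //.
have := hconv q p s Cq Cp; rewrite (ltW s0) (ltW s1) => /(_ isT).
lra.
Unshelve. all: by end_near. Qed.

Lemma bregman_ge0 C h y x :
  convex_on C h -> C y -> C x -> differentiable h x -> 0 <= bregman h y x.
Proof.
by move=> hconv Cy Cx dhx; rewrite bregmanE subr_ge0 (convex_on_diff_le hconv).
Qed.

Lemma interior_convex_comb C c z s :
  convex_set_in C -> interior C c -> C z -> 0 < s <= 1 ->
  interior C (s *: c + (1 - s) *: z).
Proof.
move=> Cconv /nbhs_ballP[e e0 ball_c] Cz /andP[s0 s1].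
apply/nbhs_ballP; exists (s * e); first exact: mulr_gt0.
move=> w; rewrite -ball_normE /=; set m := s *: c + (1 - s) *: z => mw.
have -> : w = s *: (c + s^-1 *: (w - m)) + (1 - s) *: z.
  by rewrite scalerDr scalerA mulfV ?gt_eqF // scale1r addrAC -/m addrC subrK.
apply: Cconv => //; last by rewrite (ltW s0) s1.
apply: ball_c; rewrite -ball_normE /= opprD addrA subrr sub0r normrN normrZ.
by rewrite ger0_norm ?invr_ge0 ?(ltW s0) // ltr_pdivrMl // distrC.
Qed.

Lemma bregman_segment_le C h c z s (p := s *: c + (1 - s) *: z) :
  convex_on C h -> C c -> C p -> differentiable h p -> 0 <= s ->
  (1 - s) * bregman h z p <= (1 - s) * (h z - h p) + s * (h c - h p).
Proof.
move=> hconv Cc Cp dhp s0.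
have zpE : (1 - s) *: (z - p) = - (s *: (c - p)).
  by apply/rowP => i; rewrite /p !mxE; ring.
have dzpE : (1 - s) * 'd h p (z - p) = - (s * 'd h p (c - p)).
  by rewrite -!linearZ zpE linearN.
have le_d := ler_wpM2l s0 (convex_on_diff_le hconv Cp Cc dhp).
by rewrite bregmanE mulrBr dzpE; lra.
Qed.

Lemma bregman_cvg0_from_interior C h c z :
  convex_set_in C -> convex_on C h ->
  (forall x, interior C x -> differentiable h x) -> {within C, continuous h} ->
  interior C c -> C z ->
  exists2 p : nat -> V,
    (forall k, interior C (p k)) & bregman h z (p k) @[k --> \oo] --> 0.
Proof.
move=> Cconv hconv hdiff hcont intc Cz.
pose s k : R := k.+2%:R^-1.
have s_gt0 k : 0 < s k by rewrite invr_gt0 ltr0n.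
have s_lt1 k : s k < 1 by rewrite invf_lt1 ?ltr0n ?ltr1n.
have s_cvg0 : s k @[k --> \oo] --> 0.
  have := @cvg_harmonic R; rewrite -cvg_shiftS -cvg_shiftS.
  by apply: cvg_trans; apply: near_eq_cvg; near=> k.
pose p k := s k *: c + (1 - s k) *: z.
have intp k : interior C (p k).
  by apply: interior_convex_comb; rewrite ?s_gt0 ?ltW.
have Cp k : C (p k) := interior_subset (intp k).
have p_cvg : p k @[k --> \oo] --> z.
  have : p k @[k --> \oo] --> 0 *: c + (1 - 0) *: z.
    apply: cvgD; apply: cvgZ => //; try exact: cvg_cst.
    by apply: cvgB => //; exact: cvg_cst.
  by rewrite scale0r add0r subr0 scale1r.
have hp_cvg : h (p k) @[k --> \oo] --> h z.
  apply: (cvg_comp _ _ _ ((subspace_continuousP _ _).1 hcont z Cz)) => U /= hU.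
  by move: (p_cvg _ hU); rewrite nbhs_simpl /=; apply: filterS => k /(_ (Cp k)).
exists p => //.
pose u k := ((1 - s k) * (h z - h (p k)) + s k * (h c - h (p k))) / (1 - s k).
have u_cvg0 : u k @[k --> \oo] --> 0.
  have -> : 0 = ((1 - 0) * (h z - h z) + 0 * (h c - h z)) / (1 - 0) :> R.
    by rewrite subrr mulr0 mul0r addr0 mul0r.
  have one_s_cvg : 1 - s k @[k --> \oo] --> (1 - 0 : R).
    by apply: cvgB => //; exact: cvg_cst.
  apply: cvgM; last by apply: (cvgV _ one_s_cvg); rewrite subr0 oner_neq0.
  by apply: cvgD; apply: cvgM => //; apply: cvgB => //; exact: cvg_cst.
apply: (squeeze_cvgr _ (cvg_cst 0) u_cvg0); apply: nearW => k.
have dhp := hdiff _ (intp k).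
rewrite (bregman_ge0 hconv) //= /u ler_pdivlMr ?subr_gt0 // mulrC.
exact: bregman_segment_le (interior_subset intc) (Cp k) dhp (ltW (s_gt0 k)).
Unshelve. all: by end_near. Qed.

End Bregman.

Theorem lemma6 (R : realType) (n : nat) (C : set 'rV[R]_n) (h : 'rV[R]_n -> R) :
  convex_set_in C -> closed C -> interior C !=set0 ->
  legendre C h ->
  {within C, continuous h} ->
  (forall (x : nat -> 'rV[R]_n) (y : 'rV[R]_n),
     (forall k, interior C (x k)) -> C y ->
     bregman h y (x k) @[k --> \oo] --> 0 ->
     x k @[k --> \oo] --> y) ->
  strictly_convex_on C h.
Proof.
move=> Cconv _ [c intc] [hconv hdiff _ _ _] hcont bregman_cvg.
move=> x y t Cx Cy neq_xy /andP[t0 t1].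
rewrite lt_neqAle hconv ?ltW // andbT; apply/negP => /eqP h_affine.
have Cz : C (t *: x + (1 - t) *: y) by apply: Cconv; rewrite ?ltW.
have [p intp Dz_cvg0] := bregman_cvg0_from_interior Cconv hconv hdiff hcont intc Cz.
have D_ge0 w k : C w -> 0 <= bregman h w (p k).
  by move=> Cw; apply: bregman_ge0 hconv Cw (interior_subset (intp k)) (hdiff _ (intp k)).
have [Dx_cvg0 Dy_cvg0] :
    bregman h x (p k) @[k --> \oo] --> 0 /\ bregman h y (p k) @[k --> \oo] --> 0.
  apply: (cvg0_convex_comb_nonneg (t := t)) => [|k|k|]; rewrite ?t0 ?t1 ?D_ge0 //.
  by move: Dz_cvg0; under eq_fun do rewrite bregman_convex_comb h_affine subrr addr0.
move/eqP: neq_xy; apply.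
exact: cvg_unique _ (bregman_cvg _ _ intp Cx Dx_cvg0) (bregman_cvg _ _ intp Cy Dy_cvg0).
Qed.
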